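(* In the virtually-$\mathbb{Z}$ setting described in the context, let $\Phi$ be a cellular automaton on $A^G$ with neighborhood $S$ and $\Delta=\max\{\mathrm{imp}(s):s\in S\}$. Let $x\in A^G$ be such that for every $k\in\mathbb{N}$ there exist finite sets $L_1\subseteq Br_-(V_{\{-k\}})$, $L_2\subseteq Br_+(V_{\{k\}})$ and sections $V_1\subseteq Br_-(V_{\{-k\}})$, $V_2\subseteq Br_+(V_{\{k\}})$ with $l(V_1)>\Delta$ and $l(V_2)>\Delta$, such that for $i=1,2$ the pattern $u_i=x|_{L_i}$ is $V_i$-blocking for $\Phi$. Then $x$ is an equicontinuity point of $\Phi$.
   Context: $G$ is a finitely generated group, $A$ a finite alphabet, $H\leq G$ a subgroup of finite index and $\varphi:H\to\mathbb{Z}$ a group isomorphism. $F\subseteq G$ is a finite set with $1_G\in F$ containing exactly one element of each right coset $Hg$, so every $g\in G$ decomposes uniquely as $g=zf$ with $z\in H$, $f\in F$. Define $p:G\to\mathbb{Z}$ by $p(zf)=\varphi(z)$. For $X\subseteq\mathbb{Z}$, $V_X=p^{-1}(X)$; $V_{\{k\}}$ is the $k$-th vertebra; $V_X$ is a section if $X=[a,b]$ is a finite integer interval, with length $l(V_{[a,b]})=b-a+1$, right arm $Br_+(V_{[a,b]})=V_{(b,\infty)}$ and left arm $Br_-(V_{[a,b]})=V_{(-\infty,a)}$ (so $Br_-(V_{\{-k\}})=V_{(-\infty,-k)}$, $Br_+(V_{\{k\}})=V_{(k,\infty)}$). For $s\in G$, $\mathrm{imp}(s)=\max\{|p(gs)-p(g)|:g\in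 V_{\{k\}}\}$, which is independent of $k$. A cellular automaton $\Phi$ with neighborhood $S\subseteq G$ finite and local map $\mu:A^S\to A$ is $\Phi(x)(g)=\mu(s\mapsto x(gs))$. For finite $V\subseteq G$, a pattern $u\in A^L$ ($L\subseteq G$ finite) is $V$-blocking for $\Phi$ if for all $x,y\in A^G$ with $x|_L=y|_L=u$ one has $\Phi^t(x)|_V=\Phi^t(y)|_V$ for all $t\in\mathbb{N}$. Metric: $G$ is given the generating set $F\cup\{\varphi^{-1}(1)\}$ together with inverses, with word metric $d$, and $A^G$ the Cantor metric $d^C(x,y)=2^{-k}$, $k=\min\{d(1_G,g):x(g)\neq y(g)\}$, with closed balls $B$. $x$ is an equicontinuity point of $\Phi$ if $\forall\epsilon>0\,\exists\delta>0\,\forall t\in\mathbb{N}$, $\Phi^t(B(x,\delta))\subseteq B(\Phi^t(x),\epsilon)$. *)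

From Stdlib Require Import ZArith Reals List.
Import ListNotations.

Set Implicit Arguments.

Inductive word_le {G : Type} (gen : G -> Prop) (mul : G -> G -> G) (one : G)
  : nat -> G -> Prop :=
| word_le_one : forall n, word_le gen mul one n one
| word_le_step : forall n g s, word_le gen mul one n g -> gen s ->
    word_le gen mul one (S n) (mul g s).

Definition finitely_generated {G : Type} (mul : G -> G -> G) (inv : G -> G)
  (one : G) : Prop :=
  exists gens : list G, forall g, exists n,
    word_le (fun s => In s gens \/ In (inv s) gens) mul one n g.

Definition std_gen {G : Type} (inv : G -> G) (H : G -> Prop) (phi : G -> Z)
  (F : list G) (s : G) : Prop :=
  In s F \/ (H s /\ phi s = 1%Z) \/ In (inv s) F \/ (H (inv s) /\ phi (inv s) = 1%Z).

Definition word_length {G : Type} (mul : G -> G -> G) (inv : G -> G) (one : G)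
  (H : G -> Prop) (phi : G -> Z) (F : list G) (g : G) (n : nat) : Prop :=
  word_le (std_gen inv H phi F) mul one n g /\
  forall m, word_le (std_gen inv H phi F) mul one m g -> (n <= m)%nat.

Definition cantor_dist {G A : Type} (mul : G -> G -> G) (inv : G -> G) (one : G)
  (H : G -> Prop) (phi : G -> Z) (F : list G) (x y : G -> A) (r : R) : Prop :=
  ((forall g, x g = y g) /\ r = 0%R) \/
  (exists k : nat,
     (exists g, x g <> y g /\ word_length mul inv one H phi F g k) /\
     (forall g m, x g <> y g -> word_length mul inv one H phi F g m -> (k <= m)%nat) /\
     r = (/ (2 ^ k))%R).

Definition in_ball {G A : Type} (mul : G -> G -> G) (inv : G -> G) (one : G)
  (H : G -> Prop) (phi : G -> Z) (F : list G) (x : G -> A) (delta : R) (y : G -> A)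
  : Prop :=
  exists r, cantor_dist mul inv one H phi F x y r /\ (r <= delta)%R.

Definition CA {G A : Type} (mul : G -> G -> G) (S : list G) (mu : list A -> A)
  (x : G -> A) : G -> A :=
  fun g => mu (map (fun s => x (mul g s)) S).

Definition equicontinuity_point {G A : Type} (mul : G -> G -> G) (inv : G -> G)
  (one : G) (H : G -> Prop) (phi : G -> Z) (F : list G)
  (Phi : (G -> A) -> (G -> A)) (x : G -> A) : Prop :=
  forall eps : R, (0 < eps)%R -> exists delta : R, (0 < delta)%R /\
    forall (t : nat) (y : G -> A),
      in_ball mul inv one H phi F x delta y ->
      in_ball mul inv one H phi F (Nat.iter t Phi x) eps (Nat.iter t Phi y).

Definition blocking {G A : Type} (Phi : (G -> A) -> (G -> A)) (L : G -> Prop)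
  (x : G -> A) (V : G -> Prop) : Prop :=
  forall y z : G -> A,
    (forall g, L g -> y g = x g) -> (forall g, L g -> z g = x g) ->
    forall (t : nat) g, V g -> Nat.iter t Phi y g = Nat.iter t Phi z g.

(* imp(s) = max { |p(g s) - p(g)| : g in V_{0} }, and V_{0} = F. *)
Definition imp {G : Type} (mul : G -> G -> G) (F : list G) (p : G -> Z) (s : G) : Z :=
  fold_right Z.max 0%Z (map (fun f => Z.abs (p (mul f s) - p f)) F).

Definition max_imp {G : Type} (mul : G -> G -> G) (F : list G) (p : G -> Z)
  (S : list G) : Z :=
  fold_right Z.max 0%Z (map (imp mul F p) S).

(* Given eps = 2^-m, the ball of radius m in the word metric lies in a band
   |p| <= m C, where C bounds how far one generator moves p.  Choose blocking
   sections V1, V2 beyond that band and let delta be small enough that every y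
   in B(x, delta) agrees with x on the patterns L1, L2 and on the whole strip
   from V1 to V2.  By induction on t, Phi^t y = Phi^t x on that strip: on V1 and
   V2 by blocking, and strictly between them because a cell only sees cells
   within Delta of it in p, which stay inside the strip since both sections are
   longer than Delta. *)

From Stdlib Require Import ZArith Reals List.
From Stdlib Require Import Lia Lra Classical Wf_nat.
Open Scope Z_scope.

Lemma least_nat (P : nat -> Prop) :
  (exists n, P n) -> exists n, P n /\ forall m, P m -> (n <= m)%nat.
Proof.
  intros HP.
  destruct (dec_inh_nat_subset_has_unique_least_element P (fun n => classic (P n)) HP)
    as [n [Hn _]].
  now exists n.
Qed.

Lemma fold_max_upper (l : list Z) a : In a l -> a <= fold_right Z.max 0 l.
Proof.
  induction l as [|b l IH]; simpl; [tauto|].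
  intros [->|Ha]; [lia|]. specialize (IH Ha). lia.
Qed.

Lemma fold_max_nonneg (l : list Z) : 0 <= fold_right Z.max 0 l.
Proof. induction l; simpl; lia. Qed.

Lemma inv_pow2_le (n m : nat) : (n <= m)%nat -> (/ 2 ^ m <= / 2 ^ n)%R.
Proof. intros Hnm. apply Rinv_le_contravar; [apply pow_lt; lra | apply Rle_pow; lra || exact Hnm]. Qed.

Lemma inv_pow2_lt (n m : nat) : (n < m)%nat -> (/ 2 ^ m < / 2 ^ n)%R.
Proof.
  intros Hnm. apply Rinv_lt_contravar.
  - apply Rmult_lt_0_compat; apply pow_lt; lra.
  - apply Rlt_pow; lra || exact Hnm.
Qed.

Lemma inv_pow2_small (eps : R) : (0 < eps)%R -> exists m : nat, (/ 2 ^ m <= eps)%R.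
Proof.
  intros Heps.
  destruct (pow_lt_1_zero (/ 2)) with (y := eps) as [m Hm]; [rewrite Rabs_pos_eq; lra | exact Heps |].
  exists m. specialize (Hm m (le_n m)).
  rewrite pow_inv, Rabs_pos_eq in Hm; [lra|].
  left. apply Rinv_0_lt_compat, pow_lt. lra.
Qed.

Section VirtuallyZ.

Variables (G : Type) (mul : G -> G -> G) (inv : G -> G) (one : G).
Hypothesis mul_assoc : forall a b c, mul a (mul b c) = mul (mul a b) c.
Hypothesis mul_one_l : forall g, mul one g = g.
Hypothesis mul_inv_l : forall g, mul (inv g) g = one.

Lemma mul_inv_r g : mul g (inv g) = one.
Proof.
  rewrite <- (mul_one_l (mul g (inv g))), <- (mul_inv_l (inv g)) at 1.
  rewrite <- mul_assoc, (mul_assoc (inv g) g (inv g)), mul_inv_l, mul_one_l.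
  apply mul_inv_l.
Qed.

Lemma mul_one_r g : mul g one = g.
Proof. now rewrite <- (mul_inv_l g), mul_assoc, mul_inv_r, mul_one_l. Qed.

Lemma inv_involutive g : inv (inv g) = g.
Proof.
  now rewrite <- (mul_one_r (inv (inv g))), <- (mul_inv_l g), mul_assoc, mul_inv_l, mul_one_l.
Qed.

Lemma word_le_mono (gen : G -> Prop) n m g :
  (n <= m)%nat -> word_le gen mul one n g -> word_le gen mul one m g.
Proof.
  intros Hnm Hw. induction Hnm as [|m _ IH]; [exact Hw|].
  clear Hw. induction IH; constructor; auto.
Qed.

Variables (H : G -> Prop) (phi : G -> Z).
Hypothesis H_one : H one.
Hypothesis H_mul : forall a b, H a -> H b -> H (mul a b).
Hypothesis H_inv : forall a, H a -> H (inv a).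
Hypothesis phi_hom : forall a b, H a -> H b -> phi (mul a b) = phi a + phi b.
Hypothesis phi_inj : forall a b, H a -> H b -> phi a = phi b -> a = b.
Hypothesis phi_surj : forall n : Z, exists z, H z /\ phi z = n.

Variables (F : list G) (p : G -> Z).
Hypothesis F_one : In one F.
Hypothesis F_transversal : forall g, exists! f, In f F /\ H (mul g (inv f)).
Hypothesis p_def : forall z f, H z -> In f F -> p (mul z f) = phi z.

Local Notation gen := (std_gen inv H phi F).
Local Notation word n g := (word_le gen mul one n g).

Lemma phi_one : phi one = 0.
Proof. pose proof (phi_hom one one H_one H_one) as E. rewrite mul_one_l in E. lia. Qed.

Lemma phi_inv a : H a -> phi (inv a) = - phi a.
Proof. intros Ha. pose proof (phi_hom (inv a) a (H_inv a Ha) Ha). rewrite mul_inv_l, phi_one in *. lia. Qed.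

Lemma p_of_H z : H z -> p z = phi z.
Proof. intros Hz. rewrite <- (mul_one_r z) at 1. now apply p_def. Qed.

Lemma p_of_F f : In f F -> p f = 0.
Proof. intros Hf. rewrite <- (mul_one_l f), p_def; auto using phi_one. Qed.

Lemma transversal_decomp g : exists z f, H z /\ In f F /\ g = mul z f.
Proof.
  destruct (F_transversal g) as [f [[Hf Hz] _]].
  exists (mul g (inv f)), f. repeat split; auto.
  now rewrite <- mul_assoc, mul_inv_l, mul_one_r.
Qed.

Lemma p_surj n : exists g, p g = n.
Proof. destruct (phi_surj n) as [z [Hz <-]]. exists z. now apply p_of_H. Qed.

(* p is invariant under left translation by H up to a shift, so p (g s) - p g
   only depends on the coset representative of g. *)
Lemma p_mul_shift g s : exists f, In f F /\ p (mul g s) = p g + p (mul f s).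
Proof.
  destruct (transversal_decomp g) as [z [f [Hz [Hf ->]]]].
  destruct (transversal_decomp (mul f s)) as [z' [f' [Hz' [Hf' E]]]].
  exists f. split; [exact Hf|].
  rewrite <- mul_assoc, E, mul_assoc, !p_def, phi_hom; auto.
Qed.

Lemma p_mul_sub_le_max_imp (T : list G) g s :
  In s T -> Z.abs (p (mul g s) - p g) <= max_imp mul F p T.
Proof.
  intros Hs. destruct (p_mul_shift g s) as [f [Hf ->]].
  assert (Himp : Z.abs (p (mul f s) - p f) <= imp mul F p s).
  { apply fold_max_upper, (in_map (fun f => Z.abs (p (mul f s) - p f))), Hf. }
  assert (imp mul F p s <= max_imp mul F p T) by apply fold_max_upper, in_map, Hs.
  rewrite (p_of_F f Hf) in Himp. lia.
Qed.

Lemma max_imp_nonneg (T : list G) : 0 <= max_imp mul F p T.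
Proof. apply fold_max_nonneg. Qed.

Lemma std_gen_finite : exists T, forall s, gen s -> In s T.
Proof.
  destruct (phi_surj 1) as [h [Hh phih]].
  exists (F ++ map inv F ++ (h :: inv h :: nil)). intros s Hs.
  rewrite !in_app_iff. simpl.
  destruct Hs as [Hs|[[Hs Es]|[Hs|[Hs Es]]]].
  - now left.
  - right; right; left. apply phi_inj; auto; lia.
  - right; left. rewrite <- (inv_involutive s). now apply in_map.
  - right; right; right; left.
    rewrite <- (inv_involutive s). f_equal. apply phi_inj; auto; lia.
Qed.

Lemma word_of_H (n : nat) z : H z -> Z.abs (phi z) = Z.of_nat n -> word n z.
Proof.
  destruct (phi_surj 1) as [h [Hh phih]].
  assert (gen_h : gen h) by (right; left; auto).
  assert (gen_inv_h : gen (inv h)) by (right; right; right; rewrite inv_involutive; auto).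
  revert z. induction n as [|n IH]; intros z Hz Ez.
  - replace z with one by (apply phi_inj; auto; rewrite phi_one; lia). constructor.
  - destruct (Z_lt_le_dec 0 (phi z)).
    + replace z with (mul (mul z (inv h)) h)
        by now rewrite <- mul_assoc, mul_inv_l, mul_one_r.
      constructor; [|exact gen_h].
      apply IH; auto. rewrite phi_hom, phi_inv; auto. lia.
    + replace z with (mul (mul z h) (inv h))
        by now rewrite <- mul_assoc, mul_inv_r, mul_one_r.
      constructor; [|exact gen_inv_h].
      apply IH; auto. rewrite phi_hom; auto. lia.
Qed.

Lemma word_of_p g : word (S (Z.abs_nat (p g))) g.
Proof.
  destruct (transversal_decomp g) as [z [f [Hz [Hf ->]]]].
  constructor; [|now left].
  apply word_of_H; [exact Hz|]. rewrite p_def by auto. lia.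
Qed.

Lemma abs_p_le_word : exists C, forall n g, word n g -> Z.abs (p g) <= Z.of_nat n * C.
Proof.
  destruct std_gen_finite as [T HT].
  exists (max_imp mul F p T). intros n g Hw.
  induction Hw as [n|n g s _ IH Hs].
  - rewrite p_of_H, phi_one by exact H_one. pose proof (max_imp_nonneg T). lia.
  - pose proof (p_mul_sub_le_max_imp T g s (HT s Hs)). lia.
Qed.

Lemma word_bound_on_region (L : list G) a b :
  exists N, forall g, In g L \/ a <= p g <= b -> word N g.
Proof.
  set (R := fold_right Z.max 0 (map (fun g => Z.abs (p g)) L)).
  exists (S (Z.abs_nat R + Z.abs_nat a + Z.abs_nat b)). intros g Hg.
  apply (word_le_mono _ (S (Z.abs_nat (p g)))); [|apply word_of_p].
  destruct Hg as [Hg|Hg].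
  - assert (Z.abs (p g) <= R) by apply fold_max_upper, (in_map (fun g => Z.abs (p g))), Hg. lia.
  - lia.
Qed.

Lemma word_length_exists g : exists n, word_length mul inv one H phi F g n.
Proof.
  destruct (least_nat (fun n => word n g)) as [n [Hn Hmin]]; [eauto using word_of_p|].
  now exists n.
Qed.

Variable (A : Type).
Local Notation in_ball := (in_ball mul inv one H phi F).

Lemma in_ball_agree (x y : G -> A) (N : nat) g :
  in_ball x (/ 2 ^ S N) y -> word N g -> y g = x g.
Proof.
  intros [r [Hr Hle]] Hg. apply NNPP. intros Hne.
  destruct Hr as [[Hall _]|(k & _ & Hmin & ->)]; [now apply Hne|].
  destruct (word_length_exists g) as [n Hn].
  assert (Hkn : (k <= n)%nat) by (apply (Hmin g); auto).
  assert (Hn_le : (n <= N)%nat) by (apply (proj2 Hn); exact Hg).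
  pose proof (inv_pow2_lt k (S N) ltac:(lia)). lra.
Qed.

Lemma in_ball_of_agree (x y : G -> A) (m : nat) (eps : R) :
  (/ 2 ^ m <= eps)%R -> (forall g, word m g -> x g = y g) -> in_ball x eps y.
Proof.
  intros Hm Hagree.
  destruct (classic (forall g, x g = y g)) as [Hall|Hne].
  { exists 0%R. split; [now left|]. pose proof (Rinv_0_lt_compat _ (pow_lt 2 m Rlt_0_2)). lra. }
  apply not_all_ex_not in Hne as [g0 Hg0].
  destruct (least_nat (fun n => exists g, x g <> y g /\ word_length mul inv one H phi F g n))
    as [n [[g [Hg Hlen]] Hmin]].
  { destruct (word_length_exists g0) as [n Hn]. eauto. }
  exists (/ 2 ^ n)%R. split.
  - right. exists n. repeat split; eauto.
  - apply (Rle_trans _ (/ 2 ^ m)); [|exact Hm].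
    apply inv_pow2_le. destruct (Nat.lt_ge_cases n m) as [Hlt|]; [|assumption].
    exfalso. apply Hg, Hagree, (word_le_mono _ n); [lia | apply Hlen].
Qed.

Variables (nbhd : list G) (mu : list A -> A).
Local Notation Phi := (CA mul nbhd mu).

Lemma CA_iter_agree_on_strip (Delta : Z) (L1 L2 : G -> Prop) (a1 b1 a2 b2 : Z) (x y : G -> A) :
  (forall g s, In s nbhd -> Z.abs (p (mul g s) - p g) <= Delta) ->
  b1 - a1 + 1 > Delta -> b2 - a2 + 1 > Delta ->
  blocking Phi L1 x (fun g => a1 <= p g <= b1) ->
  blocking Phi L2 x (fun g => a2 <= p g <= b2) ->
  (forall g, L1 g \/ L2 g \/ a1 <= p g <= b2 -> y g = x g) ->
  forall t g, a1 <= p g <= b2 -> Nat.iter t Phi y g = Nat.iter t Phi x g.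
Proof.
  intros Himp Hl1 Hl2 Hb1 Hb2 Hyx t. induction t as [|t IH]; intros g Hg.
  - apply Hyx. auto.
  - destruct (Z_le_gt_dec (p g) b1).
    { apply Hb1; [intros; apply Hyx; auto | reflexivity | lia]. }
    destruct (Z_le_gt_dec a2 (p g)).
    { apply Hb2; [intros; apply Hyx; auto | reflexivity | lia]. }
    simpl. unfold CA at 1 3. f_equal. apply map_ext_in. intros s Hs.
    apply IH. pose proof (Himp g s Hs). lia.
Qed.

Definition blocking_sections_beyond (x : G -> A) (k : nat) : Prop :=
  exists (L1 L2 : list G) (a1 b1 a2 b2 : Z),
    (forall g, a1 <= p g <= b1 -> p g < - Z.of_nat k) /\
    (forall g, a2 <= p g <= b2 -> Z.of_nat k < p g) /\
    b1 - a1 + 1 > max_imp mul F p nbhd /\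
    b2 - a2 + 1 > max_imp mul F p nbhd /\
    blocking Phi (fun g => In g L1) x (fun g => a1 <= p g <= b1) /\
    blocking Phi (fun g => In g L2) x (fun g => a2 <= p g <= b2).

Theorem equicontinuity_point_of_blocking_sections (x : G -> A) :
  (forall k, blocking_sections_beyond x k) -> equicontinuity_point mul inv one H phi F Phi x.
Proof.
  intros Hx eps Heps.
  destruct (inv_pow2_small eps Heps) as [m Hm].
  destruct abs_p_le_word as [C HC].
  set (k := Z.to_nat (Z.of_nat m * C)).
  destruct (Hx k) as (L1 & L2 & a1 & b1 & a2 & b2 & HV1 & HV2 & Hl1 & Hl2 & Hb1 & Hb2).
  pose proof (max_imp_nonneg nbhd) as Delta_nonneg.
  assert (Hb1k : b1 < - Z.of_nat k).
  { destruct (p_surj b1) as [g Hg]. rewrite <- Hg. apply HV1. lia. }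
  assert (Ha2k : Z.of_nat k < a2).
  { destruct (p_surj a2) as [g Hg]. rewrite <- Hg. apply HV2. lia. }
  destruct (word_bound_on_region (L1 ++ L2) a1 b2) as [N HN].
  exists (/ 2 ^ S N)%R. split; [apply Rinv_0_lt_compat, pow_lt; lra|].
  intros t y Hy. apply (in_ball_of_agree _ _ m _ Hm). intros g Hg. symmetry.
  apply (CA_iter_agree_on_strip (max_imp mul F p nbhd)
           (fun g => In g L1) (fun g => In g L2) a1 b1 a2 b2); auto.
  - intros g' s Hs. now apply p_mul_sub_le_max_imp.
  - intros g' Hg'. apply (in_ball_agree x y N g' Hy), HN. rewrite in_app_iff. tauto.
  - pose proof (HC m g Hg). lia.
Qed.

End VirtuallyZ.

Theorem lemma5
  (G : Type) (mul : G -> G -> G) (inv : G -> G) (one : G)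
  (Hassoc : forall a b c, mul a (mul b c) = mul (mul a b) c)
  (Hid : forall g, mul one g = g)
  (Hinv : forall g, mul (inv g) g = one)
  (Hfg : finitely_generated mul inv one)
  (H : G -> Prop) (H_one : H one)
  (H_mul : forall a b, H a -> H b -> H (mul a b))
  (H_inv : forall a, H a -> H (inv a))
  (phi : G -> Z)
  (phi_hom : forall a b, H a -> H b -> phi (mul a b) = (phi a + phi b)%Z)
  (phi_inj : forall a b, H a -> H b -> phi a = phi b -> a = b)
  (phi_surj : forall n : Z, exists z, H z /\ phi z = n)
  (F : list G) (F_one : In one F)
  (F_transversal : forall g, exists! f, In f F /\ H (mul g (inv f)))
  (p : G -> Z)
  (p_def : forall z f, H z -> In f F -> p (mul z f) = phi z)
  (A : Type) (enumA : list A) (A_finite : forall a : A, In a enumA)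
  (S : list G) (mu : list A -> A)
  (x : G -> A)
  (Hx : forall k : nat, exists (L1 L2 : list G) (a1 b1 a2 b2 : Z),
     (forall g, In g L1 -> (p g < - Z.of_nat k)%Z) /\
     (forall g, In g L2 -> (Z.of_nat k < p g)%Z) /\
     (forall g, (a1 <= p g <= b1)%Z -> (p g < - Z.of_nat k)%Z) /\
     (forall g, (a2 <= p g <= b2)%Z -> (Z.of_nat k < p g)%Z) /\
     (b1 - a1 + 1 > max_imp mul F p S)%Z /\
     (b2 - a2 + 1 > max_imp mul F p S)%Z /\
     blocking (CA mul S mu) (fun g => In g L1) x (fun g => (a1 <= p g <= b1)%Z) /\
     blocking (CA mul S mu) (fun g => In g L2) x (fun g => (a2 <= p g <= b2)%Z)) :
  equicontinuity_point mul inv one H phi F (CA mul S mu) x.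
Proof.
  apply equicontinuity_point_of_blocking_sections with (p := p); auto.
  intros k.
  destruct (Hx k) as (L1 & L2 & a1 & b1 & a2 & b2 & _ & _ & Hsections).
  now exists L1, L2, a1, b1, a2, b2.
Qed.
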